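(* Let $X$ be a nonnegative random variable with c.d.f. $F$ and $\overline{F}=1-F$, and let $\boldsymbol{\Lambda}$ be a random vector with values in $\mathcal{R}\subseteq\mathbb{R}^n$ and distribution $H_{1,\ldots,n}$, such that conditionally on $\boldsymbol{\Lambda}=\boldsymbol{\lambda}$, $X$ has c.d.f. $C(\cdot;\boldsymbol{\lambda})$ (with $\overline{C}=1-C$). Let $q\in[0,1)$ and, for $\boldsymbol{\lambda}\in\mathcal{R}$, let $q^\ast(\boldsymbol{\lambda})=C(VaR_q[X];\boldsymbol{\lambda})$ and let $CTE_{q^\ast}[X\mid\boldsymbol{\Lambda}=\boldsymbol{\lambda}]$ denote the conditional tail expectation at level $q^\ast(\boldsymbol{\lambda})$ of the distribution $C(\cdot;\boldsymbol{\lambda})$. Then, whenever the quantities involved exist, \[ CTE_q[X]=\frac{\mathbf{E}\left[\overline{C}(VaR_q[X];\boldsymbol{\Lambda})\,CTE_{q^\ast}[X\mid\boldsymbol{\Lambda}]\right]}{\overline{F}(VaR_q[X])}. \]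
   Context: For a random variable $Y$ and $q\in[0,1)$: $VaR_q[Y]=\inf\{x\in\mathbb{R}:\mathbf{P}[Y\le x]\ge q\}$ and $CTE_q[Y]=\mathbf{E}[Y\mid Y>VaR_q[Y]]$; these are applied to a conditional distribution in the obvious way. *)

From HB Require Import structures.
From mathcomp Require Import all_boot all_order all_algebra.
From mathcomp Require Import all_classical all_reals all_analysis.
Set Implicit Arguments. Unset Strict Implicit. Unset Printing Implicit Defensive.
Import Order.TTheory GRing.Theory Num.Theory.
Local Open Scope classical_set_scope.
Local Open Scope ring_scope.

(* The measurable space R^n (row vectors) with the product (= Borel)
   sigma-algebra, generated by the coordinate maps. *)
Definition RnT (R : realType) (n : nat) := 'rV[R]_n.
HB.instance Definition _ (R : realType) (n : nat) := Choice.on (RnT R n).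
HB.instance Definition _ (R : realType) (n : nat) :=
  isPointed.Build (RnT R n) (0 : 'rV[R]_n).

Definition Rn_gen (R : realType) (n : nat) : set (set (RnT R n)) :=
  [set B | exists i : 'I_n, exists A : set R,
       measurable A /\ B = (fun v : 'rV[R]_n => v ord0 i) @^-1` A].

Definition Rn (R : realType) (n : nat) := g_sigma_algebraType (@Rn_gen R n).
HB.instance Definition _ (R : realType) (n : nat) :=
  Measurable.copy (Rn R n) (g_sigma_algebraType (@Rn_gen R n)).

Local Open Scope ereal_scope.

Definition VaR d (T : measurableType d) (R : realType)
  (mu : {measure set T -> \bar R}) (Y : T -> R) (q : R) : \bar R :=
  ereal_inf [set x%:E | x in [set x : R | q%:E <= mu [set t | Y t <= x]%R]].

Definition CTE d (T : measurableType d) (R : realType)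
  (mu : {measure set T -> \bar R}) (Y : T -> R) (q : R) : \bar R :=
  let v := VaR mu Y q in
  (\int[mu]_(t in [set t | v < (Y t)%:E]) (Y t)%:E)
    * (mu [set t | v < (Y t)%:E])^-1.

From HB Require Import structures.
From mathcomp Require Import all_boot all_order all_algebra.
From mathcomp Require Import all_classical all_reals all_analysis.
From mathcomp Require Import measurable_realfun.
Set Implicit Arguments. Unset Strict Implicit. Unset Printing Implicit Defensive.
Import Order.TTheory GRing.Theory Num.Theory.
Local Open Scope classical_set_scope.
Local Open Scope ring_scope.
Local Open Scope ereal_scope.

(* Let v := VaR_q[X].  For a probability measure m on R with c.d.f. G, the
   VaR of m at level G(v) lies below v and G is flat between the two, so the
   tail of m above that VaR differs from {y > v} by an m-null set; hence
   (1 - G(v)) CTE_{G(v)}[m] = int_{y > v} y dm.  Take m = C(.; Lambda) and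
   integrate over Lambda: since the law of X and the mixture
   int C(.; Lambda) dP have the same c.d.f., they coincide, and the result is
   E[X; X > v].  Dividing by P(X > v) = 1 - F(v) gives CTE_q[X]. *)

Lemma setC_le (T : Type) d (O : orderType d) (f : T -> O) (v : O) :
  ~` [set t | (f t <= v)%O] = [set t | (v < f t)%O].
Proof. by apply/seteqP; split => t /=; rewrite ltNge => /negP. Qed.

Lemma measurable_EFin_gt (R : realType) (v : \bar R) :
  measurable [set y : R | v < y%:E].
Proof.
have := measurable_lte measurableT (measurable_cst v) (@EFin_measurable R setT).
by rewrite setTI.
Qed.

Lemma measurable_EFin_le (R : realType) (v : \bar R) :
  measurable [set y : R | y%:E <= v].
Proof.
have := measurable_lee measurableT (@EFin_measurable R setT) (measurable_cst v).
by rewrite setTI.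
Qed.

Lemma measurable_ler (R : realType) (x : R) : measurable [set y : R | y <= x]%R.
Proof. by rewrite -set_itvNyc; exact: measurable_itv. Qed.

Lemma lt_EFin_approx (R : realType) (w : \bar R) : w != +oo ->
  exists2 xs : R^nat, (forall k, w < (xs k)%:E) &
    forall y : R, w < y%:E -> exists k, (xs k < y)%R.
Proof.
case: w => [r _| // | _].
- exists (fun k => r + k.+1%:R^-1)%R => [k|y]; last first.
    by rewrite lte_fin => /ltr_add_invr.
  by rewrite lte_fin ltrDl invr_gt0 ltr0n.
- exists (fun k => - k%:R)%R => [k|y _]; first exact: ltNyr.
  exists (Num.Def.archi_bound `|y|); rewrite ltrNl.
  by rewrite (le_lt_trans (ler_norm _)) // normrN archi_boundP.
Qed.

Section unit_mass.
Context d (T : measurableType d) (R : realType) (m : {measure set T -> \bar R}).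
Hypothesis m1 : m [set: T] = 1.

Lemma unit_mass_fin_num A : measurable A -> m A \is a fin_num.
Proof.
move=> mA; rewrite ge0_fin_numE // (le_lt_trans _ (ltry 1)) // -m1.
by apply: le_measure; rewrite ?inE.
Qed.

Lemma unit_mass_setC A : measurable A -> m (~` A) = 1 - m A.
Proof.
move=> mA; have mAC : m setT = m A + m (~` A).
  by rewrite -(setUCr A) measureU //; [exact: measurableC|exact: setICr].
by rewrite m1 in mAC; rewrite mAC [m A + _]addeC addeK // unit_mass_fin_num.
Qed.

End unit_mass.

Section null_set.
Context d (T : measurableType d) (R : realType) (mu : {measure set T -> \bar R}).
Variables (D N : set T).
Hypotheses (mD : measurable D) (mN : measurable N) (N0 : mu N = 0).

Let mDN : measurable (D `&` N). Proof. exact: measurableI. Qed.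

Let DN0 : mu (D `&` N) = 0.
Proof. exact: subset_measure0 mDN mN (@subIsetr _ _ _) N0. Qed.

Lemma measure_setD_null : mu D = mu (D `\` N).
Proof.
by rewrite -[in LHS](setUIDK D N) setUC measureU0 //; exact: measurableD.
Qed.

Lemma integral_setD_null (f : T -> \bar R) : measurable_fun D f ->
  \int[mu]_(x in D) f x = \int[mu]_(x in D `\` N) f x.
Proof.
move=> mf; rewrite -[in LHS](setUIDK D N) integral_setU //.
- by rewrite null_set_integral ?add0e //; exact: measurable_funS mf.
- exact: measurableD.
- by rewrite setUIDK.
- by apply/disj_setPS => x [[_ Nx] [_ nNx]].
Qed.

End null_set.

Lemma measurable_fun_kernel_integral d d' (X : measurableType d)
    (Y : measurableType d') (R : realType) (k : R.-ker X ~> Y)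
    (D : set Y) (f : Y -> \bar R) :
  measurable D -> measurable_fun D f ->
  measurable_fun [set: X] (fun x => \int[k x]_(y in D) f y).
Proof.
move=> mD mf; have mfD := (measurable_restrictT _ mD).1 mf.
rewrite (_ : (fun x => _) = (fun x =>
    \int[k x]_y (f \_ D)^\+ y - \int[k x]_y (f \_ D)^\- y)); last first.
  by apply/funext => x; rewrite integral_mkcond integralE.
apply: emeasurable_funB; apply: measurable_fun_integral_kernel.
- exact: measurable_kernel.
- exact: funepos_ge0.
- exact: measurable_funepos.
- exact: measurable_kernel.
- exact: funeneg_ge0.
- exact: measurable_funeneg.
Qed.

Lemma VaR_lt_cdf d (T : measurableType d) (R : realType)
    (mu : {measure set T -> \bar R}) (Y : T -> R) (q x : R) :
  measurable_fun [set: T] Y ->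
  VaR mu Y q < x%:E -> q%:E <= mu [set t | Y t <= x]%R.
Proof.
move=> mY /ereal_inf_lt[_ [x' /= qx' <-]]; rewrite lte_fin => x'x.
apply: (le_trans qx'); apply: le_measure; rewrite ?inE.
- by rewrite -[X in measurable X]setTI; apply: measurable_fun_le.
- by rewrite -[X in measurable X]setTI; apply: measurable_fun_le.
- by move=> t /= Yt; exact: le_trans Yt (ltW x'x).
Qed.

Section CTE_at_cdf_level.
Context (R : realType) (m : {measure set R -> \bar R}).
Hypothesis m1 : m [set: R] = 1.
Variable v : \bar R.

Local Notation B := [set y : R | y%:E <= v].
Local Notation w := (VaR m id (fine (m B))).

Let mB : measurable B. Proof. exact: measurable_EFin_le. Qed.

Let mBE : (fine (m B))%:E = m B.
Proof. by rewrite fineK // unit_mass_fin_num. Qed.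

Lemma VaR_cdf_le : w <= v.
Proof.
case: v mBE => [r| |] mBr; [|by rewrite leey|].
- apply: ereal_inf_lbound; exists r => //=; rewrite mBr.
  by apply: le_measure; rewrite ?inE //; exact: measurable_ler.
- rewrite leeNy_eq; apply/eqP/eq_ninfty => r.
  apply: ereal_inf_lbound; exists r => //=.
  rewrite mBr (_ : [set _ | _] = set0) ?measure0 //.
  by apply/seteqP; split => y //=; rewrite leeNy_eq.
Qed.

Lemma measure_VaR_cdf_itv x : w < x%:E -> m (B `\` [set y | y <= x]%R) = 0.
Proof.
move=> /(VaR_lt_cdf (@measurable_id _ R setT)); rewrite mBE => Bx.
have [vx|xv] := leP v x%:E.
  rewrite (_ : _ `\` _ = set0) ?measure0 //; apply/seteqP; split => y //= [yv].
  by move/negP; rewrite -lee_fin (le_trans yv vx).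
have xB : [set y | y <= x]%R `<=` B.
  by move=> y /= yx; rewrite (le_trans _ (ltW xv)).
have mx := measurable_ler x.
have Bx0 : m B - m [set y | y <= x]%R = 0.
  have -> : m B = m [set y | y <= x]%R.
    by apply/le_anti; rewrite Bx le_measure ?inE.
  by rewrite subee // unit_mass_fin_num.
by rewrite measureD ?setIidr // -ge0_fin_numE // unit_mass_fin_num.
Qed.

Lemma measure_VaR_cdf_gap : m ([set y | w < y%:E] `&` B) = 0.
Proof.
have [->|wNy] := eqVneq w +oo.
  by rewrite (_ : _ `&` _ = set0) ?measure0 //; apply/seteqP; split => y //= [].
have [xs wxs xsP] := lt_EFin_approx wNy.
apply: measure_negligible.
  by apply: measurableI => //; exact: measurable_EFin_gt.
apply: (@negligibleS _ _ _ _ (\bigcup_k (B `\` [set y | y <= xs k]%R))).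
  by move=> y [/xsP[k ky] By]; exists k => //; split => //=; rewrite leNgt ky.
apply: negligible_bigcup => k; apply/negligibleP.
- by apply: measurableD => //; exact: measurable_ler.
- exact: measure_VaR_cdf_itv (wxs k).
Qed.

Lemma CTE_at_cdf_level :
  (1 - m B) * CTE m id (fine (m B)) = \int[m]_(y in [set y | v < y%:E]) y%:E.
Proof.
set A := [set y : R | v < y%:E].
have mA : measurable A := measurable_EFin_gt v.
have mW : measurable [set y : R | w < y%:E] := measurable_EFin_gt w.
have mG : measurable ([set y | w < y%:E] `&` B) := measurableI _ _ mW mB.
have WA : [set y | w < y%:E] `\` ([set y | w < y%:E] `&` B) = A.
  rewrite setDIr setDv set0U setDE (setC_le EFin) setIidr // => y /=.
  exact: le_lt_trans VaR_cdf_le.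
rewrite /CTE /= (measure_setD_null mW mG measure_VaR_cdf_gap).
rewrite (integral_setD_null mW mG measure_VaR_cdf_gap) ?WA; last first.
  exact: EFin_measurable.
rewrite -unit_mass_setC // (setC_le EFin) -/A.
have [mA0|mA0] := eqVneq (m A) 0.
  by rewrite mA0 mul0e null_set_integral //; exact: EFin_measurable.
by rewrite muleCA divee ?mule1 // unit_mass_fin_num.
Qed.

End CTE_at_cdf_level.

Section kprecomp.
Context d1 d2 d3 (X : measurableType d1) (Y : measurableType d2)
  (Z : measurableType d3) (R : realType).
Variables (k : R.-pker Y ~> Z) (f : X -> Y).

Definition kprecomp (mf : measurable_fun [set: X] f)
  : X -> {measure set Z -> \bar R} := k \o f.

Hypothesis mf : measurable_fun [set: X] f.

Let measurable_kprecomp U : measurable U ->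
  measurable_fun [set: X] (kprecomp mf ^~ U).
Proof. by move=> mU; exact: measurableT_comp (measurable_kernel k U mU) mf. Qed.

HB.instance Definition _ :=
  @isKernel.Build _ _ X Z R (kprecomp mf) measurable_kprecomp.

Let kprecomp_prob x : kprecomp mf x [set: Z] = 1.
Proof. exact: prob_kernel. Qed.

HB.instance Definition _ :=
  @Kernel_isProbability.Build _ _ X Z R (kprecomp mf) kprecomp_prob.

End kprecomp.

Section mixture.
Context d d' (T : measurableType d) (Y : measurableType d') (R : realType).
Variables (P : probability T R) (k : R.-pker T ~> Y).

(* Realised as the kernel composition of the constant kernel [P] (indexed by
   [unit]) with [k]; [mixtureE] gives the usual formula. *)
Definition mixture : {measure set Y -> \bar R} :=
  mkcomp
    (kprobability (measurable_cst (P : pprobability T R)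
                   : measurable_fun [set: unit] _))
    (kprecomp k (@measurable_snd _ _ unit T)) tt.

Lemma mixtureE U : mixture U = \int[P]_t k t U.
Proof. by []. Qed.

Lemma mixture_setT : mixture [set: Y] = 1.
Proof.
rewrite mixtureE (eq_integral (cst 1)) => [|t _]; last exact: prob_kernel.
by rewrite integral_cst //= mul1e probability_setT.
Qed.

Lemma ge0_integral_mixture (f : Y -> \bar R) : (forall y, 0 <= f y) ->
  measurable_fun [set: Y] f ->
  \int[mixture]_y f y = \int[P]_t \int[k t]_y f y.
Proof. by move=> f0 mf; rewrite integral_kcomp. Qed.

End mixture.

Lemma eq_measure_cdf (R : realType) (m1 m2 : {measure set R -> \bar R}) :
  m1 [set: R] = 1 -> m2 [set: R] = 1 ->
  (forall x, m1 [set y | y <= x]%R = m2 [set y | y <= x]%R) ->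
  forall U, measurable U -> m1 U = m2 U.
Proof.
move=> m1T m2T cdf12.
have [xs _ xsP] := @lt_EFin_approx R -oo isT.
apply: (measure_unique (RGenOInfty.G (R:=R)) (fun k => `](xs k), +oo[%classic)).
- exact: RGenOInfty.measurableE.
- move=> _ _ [x ->] [y ->]; exists (Num.max x y).
  rewrite !set_itvoy; apply/seteqP; split => z /=; rewrite gt_max.
    by case=> -> ->.
  by move/andP.
- by move=> k; exists (xs k).
- apply/seteqP; split => // y _; have [k xsk] := xsP y (ltNyr y).
  by exists k => //=; rewrite in_itv /= andbT.
- move=> _ [x ->]; rewrite set_itvoy -setC_le.
  by rewrite !unit_mass_setC ?cdf12 //; exact: measurable_ler.
- by move=> k; rewrite -ge0_fin_numE // unit_mass_fin_num.
Qed.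

Section law_mixture.
Context d (T : measurableType d) (R : realType) (P : probability T R)
  (k : R.-pker T ~> R) (X : {mfun T >-> R}).
Hypothesis lawX : forall U, measurable U -> distribution P X U = mixture P k U.
Hypothesis X_ge0 : forall t, (0 <= X t)%R.

Let N := [set y : R | y < 0]%R.

Let mN : measurable N.
Proof. by rewrite /N -(set_itvNyo 0%R); exact: measurable_itv. Qed.

Lemma ae_kernel_neg0 : ae_eq P [set: T] (fun t => k t N) (cst 0).
Proof.
apply/(ae_eq_integral_abs P measurableT (measurable_kernel k _ mN)).
under eq_integral do rewrite gee0_abs //.
rewrite -mixtureE -lawX // /distribution /pushforward.
rewrite (_ : X @^-1` N = set0) ?measure0 //.
by apply/seteqP; split => t //=; rewrite /N /= ltNge X_ge0.
Qed.

(* Cutting off the negative half-line makes the integrand nonnegative, so that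
   [ge0_integral_mixture] applies; [k t] charges it only for [P]-almost no [t]. *)
Lemma integral_preimage_mixture (A : set R) : measurable A ->
  \int[P]_(t in X @^-1` A) (X t)%:E = \int[P]_t \int[k t]_(y in A) y%:E.
Proof.
move=> mA; have mAN : measurable (A `\` N) := measurableD mA mN.
set g := EFin \_ (A `\` N).
have mg : measurable_fun [set: R] g :=
  (measurable_restrictT _ mAN).1 (@EFin_measurable R _).
have g0 y : 0 <= g y.
  rewrite /g patchE; case: ifPn => // /set_mem[_].
  by rewrite lee_fin leNgt => /negP.
transitivity (\int[P]_t g (X t)).
  rewrite integral_mkcond; apply: eq_integral => t _; rewrite /g !patchE.
  have XN : (X t \in N) = false by apply: memNset; rewrite /N /= ltNge X_ge0.
  by rewrite in_setD XN andbT.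
transitivity (\int[distribution P X]_y g y).
  by rewrite ge0_integral_distribution.
rewrite (eq_measure_integral (mixture P k)) => [|U mU _]; last exact: lawX.
rewrite ge0_integral_mixture //; apply: ae_eq_integral => //.
- exact: measurable_fun_kernel_integral.
- exact: measurable_fun_kernel_integral.
apply: filterS ae_kernel_neg0 => t /(_ I) kN0 _.
rewrite [RHS](integral_setD_null mA mN kN0); last exact: EFin_measurable.
by rewrite /g -integral_mkcond.
Qed.

End law_mixture.

Theorem corollary4p2 (R : realType) (d : measure_display) (T : measurableType d)
  (P : probability T R) (n : nat) (X : {mfun T >-> R}) (Lam : {mfun T >-> Rn R n})
  (C : R.-pker (Rn R n) ~> R) (q : R) :
  (forall t, (0 <= X t)%R) ->
  (* conditionally on Lam = l, X has distribution C l, i.e. c.d.f. C(. ; l) *)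
  (forall (x : R) (B : set (Rn R n)), measurable B ->
     P ([set t | (X t <= x)%R] `&` Lam @^-1` B)
     = \int[distribution P Lam]_(l in B) C l [set y | (y <= x)%R]) ->
  (0 <= q < 1)%R ->
  (* existence of CTE_q[X]: Fbar(VaR_q[X]) > 0 *)
  0 < 1 - P [set t | (X t)%:E <= VaR P X q] ->
  CTE P X q
  = (\int[P]_t
       ((1 - C (Lam t) [set y | y%:E <= VaR P X q])
        * CTE (C (Lam t)) id (fine (C (Lam t) [set y | y%:E <= VaR P X q]))))
    * (1 - P [set t | (X t)%:E <= VaR P X q])^-1.
Proof.
move=> X_ge0 cond_law _ _.
set v := VaR P X q.
pose K := kprecomp C (measurable_funPT Lam).
have lawX U : measurable U -> distribution P X U = mixture P K U.
  apply: eq_measure_cdf => [||x]; [exact: probability_setT|exact: mixture_setT|].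
  have := cond_law x setT measurableT; rewrite preimage_setT setIT => PXx.
  transitivity (P [set t | X t <= x]%R); first by [].
  rewrite PXx ge0_integral_distribution //.
  exact: measurable_kernel C _ (measurable_ler x).
rewrite (eq_integral (fun t => \int[K t]_(y in [set y | v < y%:E]) y%:E)); last first.
  by move=> t _; rewrite CTE_at_cdf_level // prob_kernel.
rewrite -(integral_preimage_mixture lawX X_ge0 (measurable_EFin_gt v)).
rewrite -probability_setC; last exact: measurable_funPTI (measurable_EFin_le v).
by rewrite setC_le.
Qed.
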